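(* Let $G$ be a fullerene graph. If $G$ has a perfect star packing, then the number of vertices of $G$ is divisible by $8$.
   Context: A fullerene graph is a finite simple connected (equivalently, $3$-connected) plane cubic graph all of whose faces are pentagons or hexagons. A perfect star packing of a graph $G$ is a spanning subgraph of $G$ every connected component of which is isomorphic to the star $K_{1,3}$. *)

From mathcomp Require Import all_boot.
Set Implicit Arguments.
Unset Strict Implicit.
Unset Printing Implicit Defensive.

Section Fullerene.
Variable V : finType.

Definition simple_graph (e : rel V) : Prop := symmetric e /\ irreflexive e.

Definition cubic (e : rel V) : Prop := forall v : V, #|[set w | e v w]| = 3.

Definition connected_graph (e : rel V) : Prop := forall u v : V, connect e u v.

(* Rotation system (combinatorial embedding): rot v is a cyclic permutation
   of the neighbourhood of v. *)
Definition rotation_system (e : rel V) (rot : V -> V -> V) : Prop :=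
  [/\ forall v w, e v w -> e v (rot v w),
      forall v, {in [pred w | e v w] &, injective (rot v)}
    & forall v w w', e v w -> e v w' -> fconnect (rot v) w w'].

Definition darts (e : rel V) : {set V * V} := [set p | e p.1 p.2].

(* Face-traversal permutation on darts: arriving at v from u, leave along
   the successor of u in the rotation at v. *)
Definition face_step (rot : V -> V -> V) (p : V * V) : V * V :=
  (p.2, rot p.2 p.1).

Definition face_of (rot : V -> V -> V) (p : V * V) : {set V * V} :=
  [set q | fconnect (face_step rot) p q].

Definition faces (e : rel V) (rot : V -> V -> V) : {set {set V * V}} :=
  [set face_of rot p | p in darts e].

(* Euler's formula V - E + F = 2 (with E = #darts / 2): the connected
   rotation system has genus 0, i.e. it is a plane embedding. *)
Definition euler_genus0 (e : rel V) (rot : V -> V -> V) : Prop :=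
  (2 * #|V| + 2 * #|faces e rot| = #|darts e| + 4)%N.

Definition faces_5_or_6 (e : rel V) (rot : V -> V -> V) : Prop :=
  forall p, p \in darts e -> #|face_of rot p| \in [:: 5; 6]%N.

Definition fullerene (e : rel V) : Prop :=
  [/\ simple_graph e, cubic e, connected_graph e
    & exists rot : V -> V -> V,
        [/\ rotation_system e rot, euler_genus0 e rot & faces_5_or_6 e rot]].

Definition is_K13 (h : rel V) (C : {set V}) : Prop :=
  exists c x1 x2 x3 : V,
    [/\ uniq [:: c; x1; x2; x3],
        C = [set c; x1; x2; x3]
      & forall u w, u \in C -> w \in C ->
          (h u w <-> ((u == c) && (w \in [set x1; x2; x3]))
                     || ((w == c) && (u \in [set x1; x2; x3])))].

Definition perfect_star_packing (e : rel V) : Prop :=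
  exists h : rel V,
    [/\ symmetric h,
        forall u w, h u w -> e u w
      & forall v, is_K13 h [set w | connect h v w]].

End Fullerene.

From mathcomp Require Import all_boot zify.
Set Implicit Arguments. Unset Strict Implicit. Unset Printing Implicit Defensive.

(* With c centres and 3c leaves, |V| = 4c, so it suffices that the number of
   leaves is even; the leaves are paired off by fixed-point-free involutions
   read from the embedding.  For a leaf v let y be the neighbour following the
   centre of v in the rotation at v; y is again a leaf.  If the rotation at y
   does not go from v straight to the centre of y, then v follows the centre
   of y at y, and v <-> y is the pairing.  Otherwise the face through the dart
   (centre v, v) reaches (centre y, v') after three steps, with v' a leaf; it
   cannot close after five steps, since its fifth dart starts at a leaf, so it
   is a hexagon, and its last two darts show that v' is paired back to v in
   the same way. *)

Lemma even_card_involution (T : finType) (f : T -> T) (S : {set T}) :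
  {in S, forall x, f x \in S} -> {in S, forall x, f (f x) = x} ->
  {in S, forall x, f x != x} -> ~~ odd #|S|.
Proof.
move=> fS fK f_neq.
pose lower x := enum_rank x < enum_rank (f x).
have lower_f x : x \in S -> lower (f x) = ~~ lower x.
  move=> xS; rewrite /lower fK // ltnNge leq_eqVlt negb_or andbC.
  by rewrite val_eqE (inj_eq enum_rank_inj) eq_sym f_neq // andbT.
pose S1 := [set x in S | lower x].
have f_inj : {in S1 &, injective f}.
  by move=> x y /setIdP[xS _] /setIdP[yS _] fxy; rewrite -(fK x) // fxy fK.
have S1_compl : S :\: S1 = f @: S1.
  apply/setP=> x; apply/setDP/imsetP => [[xS] | [y /setIdP[yS y_low] ->]].
    by rewrite inE xS => x_high; exists (f x); rewrite ?fK // inE fS // lower_f.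
  by rewrite inE lower_f // y_low fS.
have S1_sub : S :&: S1 = S1 by apply/setIidPr/subsetP => x /setIdP[].
by rewrite -(cardsID S1 S) S1_sub S1_compl card_in_imset // addnn odd_double.
Qed.

Lemma iter_neq_order (T : finType) (f : T -> T) x k :
  0 < k < order f x -> iter k f x != x.
Proof.
case/andP=> k_gt0 k_lt; apply: contraTneq k_gt0 => fkx.
by rewrite -(findex_iter k_lt) fkx findex0.
Qed.

Lemma card_set3 (T : finType) (x1 x2 x3 : T) :
  uniq [:: x1; x2; x3] -> #|[set x1; x2; x3]| = 3.
Proof.
move=> uniq_x; rewrite -[3]/(size [:: x1; x2; x3]) -(card_uniqP uniq_x).
by apply: eq_card => w; rewrite !inE -!orbA.
Qed.

Section Rotation.
Variables (V : finType) (e : rel V) (rot : V -> V -> V).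
Hypotheses (e_sym : symmetric e) (e_cubic : cubic e).
Hypothesis rot_sys : rotation_system e rot.

Lemma rot_edge v w : e v w -> e v (rot v w).
Proof. by case: rot_sys => rot_e _ _; apply: rot_e. Qed.

Lemma order_rot v w : e v w -> order (rot v) w = 3.
Proof.
move=> evw; rewrite /order -(e_cubic v); apply: eq_card => x; rewrite inE.
apply/idP/idP => [| evx]; last by case: rot_sys => _ _; apply.
by move/iter_findex <-; elim: (findex _ _ _) => //= n; apply: rot_edge.
Qed.

Lemma orbit_rot v w : e v w -> orbit (rot v) w = [:: w; rot v w; rot v (rot v w)].
Proof. by move=> evw; rewrite /orbit order_rot. Qed.

Lemma rot_nbr v w x : e v w -> e v x -> x \in [:: w; rot v w; rot v (rot v w)].
Proof.
move=> evw evx; rewrite -orbit_rot // -fconnect_orbit.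
by case: rot_sys => _ _; apply.
Qed.

Lemma rot3 v w : e v w -> rot v (rot v (rot v w)) = w.
Proof.
move=> evw; have rot_homo : {homo rot v : x / x \in [pred x | e v x]}.
  by move=> x; apply: rot_edge.
have [_ rot_inj _] := rot_sys.
by have := iter_order_in rot_homo (@rot_inj v) evw; rewrite order_rot.
Qed.

Lemma rot_neq v w : e v w -> rot v w != w.
Proof. by move=> evw; apply: (@iter_neq_order _ _ _ 1); rewrite order_rot. Qed.

Lemma rot2_neq v w : e v w -> rot v (rot v w) != w.
Proof. by move=> evw; apply: (@iter_neq_order _ _ _ 2); rewrite order_rot. Qed.

Lemma face_step_darts : {homo face_step rot : p / p \in darts e}.
Proof. by case=> u v; rewrite !inE /= e_sym => /rot_edge. Qed.

Lemma face_step_inj : {in darts e &, injective (face_step rot)}.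
Proof.
case=> u v [u' v']; rewrite !inE /= => euv eu'v' [vv']; subst v'.
by have [_ rot_inj _] := rot_sys; move/rot_inj => -> //; rewrite inE e_sym.
Qed.

Lemma card_face_of p : #|face_of rot p| = order (face_step rot) p.
Proof. by apply: eq_card => q; rewrite inE. Qed.

Lemma iter_order_face_step p :
  p \in darts e -> iter (order (face_step rot) p) (face_step rot) p = p.
Proof. exact: iter_order_in face_step_darts face_step_inj p. Qed.

End Rotation.

Section PerfectStarPacking.
Variables (V : finType) (h : rel V).
Hypothesis h_K13 : forall v, is_K13 h [set w | connect h v w].

Definition is_center u := #|[set w | h u w]| == 3.

Definition center_of u := odflt u [pick w | h u w].

Lemma K13_nbrs u : exists c x1 x2 x3,
  [/\ uniq [:: c; x1; x2; x3], u \in c |: [set x1; x2; x3],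
      [set w | h c w] = [set x1; x2; x3] &
      forall x, x \in [set x1; x2; x3] -> [set w | h x w] = [set c]].
Proof.
have [c [x1 [x2 [x3 [uniq_cx C_eq K13]]]]] := h_K13 u.
exists c, x1, x2, x3.
set X := [set x1; x2; x3]; set C := [set w | connect h u w] in C_eq K13 *.
have C_closed y w : y \in C -> h y w -> w \in C.
  by rewrite !inE => uy /connect1; apply: connect_trans.
have C_cX : C = c |: X by rewrite C_eq /X !setUA.
have nbrsE y : y \in C -> [set w | h y w] =
    [set w | ((y == c) && (w \in X)) || ((w == c) && (y \in X))].
  move=> yC; apply/setP => w; rewrite [in LHS]inE [in RHS]inE.
  apply/idP/idP => [hyw | hyw]; first by apply/(K13 y w yC (C_closed y w yC hyw)).
  apply/(K13 y w yC) => //; rewrite C_cX in_setU1.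
  by case/orP: hyw => /andP[] => [_ ->|-> _]; rewrite ?orbT.
have c_notin_X : c \notin X by case/andP: uniq_cx; rewrite !inE -!orbA.
split=> // [| | x xX]; first by rewrite -C_cX inE connect0.
  rewrite nbrsE ?C_cX ?setU11 // eqxx (negbTE c_notin_X).
  by apply/setP => w; rewrite inE andbF orbF.
have x_neq_c : (x == c) = false by apply: contraNF c_notin_X => /eqP <-.
rewrite nbrsE ?C_cX ?setU1r // x_neq_c xX.
by apply/setP => w; rewrite !inE andbT.
Qed.

Lemma center_ofE u c : [set w | h u w] = [set c] -> center_of u = c.
Proof.
move=> nbrs_u; rewrite /center_of; case: pickP => [w huw | /(_ c)].
  by apply/set1P; rewrite -nbrs_u inE.
by move: (set11 c); rewrite -nbrs_u inE => ->.
Qed.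

Lemma leaf_center u :
  ~~ is_center u -> [set w | h u w] = [set center_of u] /\ is_center (center_of u).
Proof.
have [c [x1 [x2 [x3 [uniq_cx]]]]] := K13_nbrs u.
have card_X : #|[set x1; x2; x3]| = 3 by rewrite card_set3 //; case/andP: uniq_cx.
rewrite in_setU1 => /orP[/eqP-> | uX] nbrs_c nbrs_X.
  by rewrite /is_center nbrs_c card_X.
by move=> _; rewrite (center_ofE (nbrs_X u uX)) /is_center nbrs_c card_X nbrs_X.
Qed.

Lemma h_center_of u : ~~ is_center u -> h u (center_of u).
Proof. by case/leaf_center => nbrs_u _; rewrite -in_set nbrs_u set11. Qed.

Lemma center_leaf c w : is_center c -> h c w -> ~~ is_center w /\ center_of w = c.
Proof.
have [c' [x1 [x2 [x3 [_]]]]] := K13_nbrs c.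
rewrite in_setU1 => /orP[/eqP-> | cX] nbrs_c' nbrs_X.
  move=> _ hcw; have nbrs_w : [set y | h w y] = [set c'].
    by apply: nbrs_X; rewrite -nbrs_c' inE.
  by rewrite /is_center nbrs_w cards1 (center_ofE nbrs_w).
by rewrite /is_center nbrs_X // cards1.
Qed.

Variable e : rel V.
Hypotheses (e_sym : symmetric e) (e_cubic : cubic e).
Hypothesis h_sub : forall u w, h u w -> e u w.

Lemma center_edge c w : is_center c -> e c w -> h c w.
Proof.
move=> c_center; have : [set w | h c w] \subset [set w | e c w].
  by apply/subsetP => x; rewrite !inE => /h_sub.
rewrite subEproper properEcard (eqP c_center) e_cubic ltnn andbF orbF.
by move/eqP/setP/(_ w); rewrite !inE => ->.
Qed.

Lemma leaf_nbr v w : e v w -> w != center_of v -> ~~ is_center w.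
Proof.
move=> evw; apply: contra => w_center.
have hwv : h w v by apply: center_edge; rewrite // e_sym.
by have [_ ->] := center_leaf w_center hwv.
Qed.

Lemma card_leaves : #|[set v | ~~ is_center v]| = 3 * #|[set c | is_center c]|.
Proof.
rewrite -sum1_card (partition_big center_of [in [set c | is_center c]]) => [|v].
  rewrite mulnC -sum_nat_const; apply: eq_bigr => c; rewrite inE => c_center.
  rewrite sum1dep_card -(eqP c_center); apply: eq_card => w; rewrite !inE.
  apply/andP/idP => [[w_leaf /eqP cw] | hcw]; last first.
    by have [-> ->] := center_leaf c_center hcw.
  by subst c; apply: center_edge; rewrite // e_sym h_sub ?h_center_of.
by rewrite !inE => /leaf_center[].
Qed.

Variable rot : V -> V -> V.
Hypotheses (e_irr : irreflexive e) (rot_sys : rotation_system e rot).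
Hypothesis faces56 : faces_5_or_6 e rot.

Definition next_leaf v := rot v (center_of v).

Definition turns_back v := rot (next_leaf v) v == center_of (next_leaf v).

Definition across_leaf v := rot (center_of (next_leaf v)) (next_leaf v).

Lemma leaf_edge_center v : ~~ is_center v -> e v (center_of v).
Proof. by move/h_center_of/h_sub. Qed.

Lemma next_leaf_leaf v : ~~ is_center v -> e v (next_leaf v) /\ ~~ is_center (next_leaf v).
Proof.
move=> v_leaf; have ev := leaf_edge_center v_leaf.
split; first exact: (rot_edge rot_sys ev).
exact: leaf_nbr (rot_edge rot_sys ev) (rot_neq e_cubic rot_sys ev).
Qed.

Lemma next_leaf_pair v : ~~ is_center v -> ~~ turns_back v ->
  [/\ ~~ is_center (next_leaf v), ~~ turns_back (next_leaf v),
      next_leaf (next_leaf v) = v & next_leaf v != v].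
Proof.
move=> v_leaf v_fwd; have [ev y_leaf] := next_leaf_leaf v_leaf.
move: v_fwd; rewrite /turns_back; set y := next_leaf v in ev y_leaf * => v_fwd.
have ey_cy := leaf_edge_center y_leaf.
have v_neq_cy : (v == center_of y) = false.
  by apply: contraNF v_leaf => /eqP->; have [] := leaf_center y_leaf.
have y_v : next_leaf y = v.
  have eyv : e y v by rewrite e_sym.
  have := rot_nbr e_cubic rot_sys ey_cy eyv; rewrite !inE v_neq_cy /=.
  case/orP=> /eqP // v_eq; move: v_fwd.
  by rewrite v_eq (rot3 e_cubic rot_sys ey_cy) eqxx.
split=> //; last by apply: contraTneq ev => ->; rewrite e_irr.
by rewrite y_v /y /next_leaf (rot2_neq e_cubic rot_sys (leaf_edge_center v_leaf)).
Qed.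

Lemma face_step_turns_back v : turns_back v ->
  iter 3 (face_step rot) (center_of v, v) = (center_of (next_leaf v), across_leaf v).
Proof. by move=> /eqP v_back; rewrite iterS /= /face_step /= v_back. Qed.

Lemma across_leaf_center v : ~~ is_center v ->
  ~~ is_center (across_leaf v) /\ center_of (across_leaf v) = center_of (next_leaf v).
Proof.
move=> v_leaf; have [_ y_leaf] := next_leaf_leaf v_leaf.
have [_ cy_center] := leaf_center y_leaf.
have e_cy_w : e (center_of (next_leaf v)) (across_leaf v).
  by apply: (rot_edge rot_sys); rewrite e_sym leaf_edge_center.
exact: center_leaf cy_center (center_edge cy_center e_cy_w).
Qed.

Lemma across_leaf_pair v : ~~ is_center v -> turns_back v ->
  [/\ ~~ is_center (across_leaf v), turns_back (across_leaf v),
      across_leaf (across_leaf v) = v & across_leaf v != v].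
Proof.
move=> v_leaf v_back; have [w_leaf cw] := across_leaf_center v_leaf.
set w := across_leaf v in w_leaf cw *; set p := (center_of v, v).
have [e_w_nw nw_leaf] := next_leaf_leaf w_leaf.
have [_ cv_center] := leaf_center v_leaf.
have p_dart : p \in darts e by rewrite inE /= e_sym leaf_edge_center.
have o56 : order (face_step rot) p \in [:: 5; 6] by rewrite -card_face_of faces56.
have walk3 : iter 3 (face_step rot) p = (center_of w, w).
  by rewrite face_step_turns_back // cw.
have walk5 : iter 5 (face_step rot) p = (next_leaf w, rot (next_leaf w) w).
  by rewrite -[5]/(2 + 3) iterD walk3.
have w_neq_v : w != v.
  have : iter 3 (face_step rot) p != p.
    by apply: iter_neq_order; move: o56; rewrite !inE => /orP[] /eqP ->.
  by rewrite walk3; apply: contra_neq => ->.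
have := iter_order_face_step e_sym rot_sys p_dart.
move: o56; rewrite !inE => /orP[] /eqP ->.
  by rewrite walk5 => -[nw_cv _]; move: nw_leaf; rewrite nw_cv cv_center.
rewrite -[6]/(1 + 5) iterD walk5 /= /face_step /= => -[rot_nw_w rot_rot].
have e_cv_nw : e (center_of v) (next_leaf w).
  by rewrite -rot_nw_w e_sym (rot_edge rot_sys) // e_sym.
have [_ c_nw] := center_leaf cv_center (center_edge cv_center e_cv_nw).
split=> //; first by rewrite /turns_back c_nw rot_nw_w.
by rewrite /across_leaf c_nw -rot_nw_w.
Qed.

Lemma even_card_leaves : ~~ odd #|[set v | ~~ is_center v]|.
Proof.
set L := [set v | ~~ is_center v]; set T := [set v | turns_back v].
have even_back : ~~ odd #|L :&: T|.
  apply: (@even_card_involution _ across_leaf) => v; rewrite !inE => /andP[v_leaf v_back];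
  by have [w_leaf w_back ? ?] := across_leaf_pair v_leaf v_back; rewrite ?w_leaf ?w_back.
have even_fwd : ~~ odd #|L :\: T|.
  apply: (@even_card_involution _ next_leaf) => v; rewrite !inE => /andP[v_fwd v_leaf];
  by have [w_leaf w_fwd ? ?] := next_leaf_pair v_leaf v_fwd; rewrite ?w_leaf ?w_fwd.
by rewrite -(cardsID T L) oddD (negbTE even_back) (negbTE even_fwd).
Qed.

End PerfectStarPacking.

Theorem mainTheorem1 (V : finType) (e : rel V) :
  fullerene e -> perfect_star_packing e -> (8 %| #|V|)%N.
Proof.
case=> [[e_sym e_irr] e_cubic _ [rot [rot_sys _ faces56]]] [h [_ h_sub h_K13]].
have leavesE : ~: [set c | is_center h c] = [set v | ~~ is_center h v].
  by apply/setP => v; rewrite !inE.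
have card_V := cardsC [set c | is_center h c]; rewrite leavesE in card_V.
have card_L := card_leaves h_K13 e_sym e_cubic h_sub.
have even_L := even_card_leaves h_K13 e_sym e_cubic h_sub e_irr rot_sys faces56.
rewrite -dvdn2 in even_L; rewrite -card_V; lia.
Qed.
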